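(* Let $M\ge K\ge 2$ be integers and let $P_u>\frac{1}{M-1}$. Then $$K\log_2\!\left(1+\frac{P_uM}{P_u(K-1)+1}\right)\ge K\log_2\!\left(1+P_u(M-K+1)\right)$$ if and only if $K\ge K_{\mathrm{cross,UL}}:=M+1-\dfrac{1}{P_u}$.
   Context: The left-hand side is the paper's closed-form low-SNR ergodic uplink sum-rate expression for maximum ratio combining and the right-hand side that for zero-forcing reception, with $M$ base-station antennas, $K$ single-antenna users and per-user transmit power $P_u$ (unit noise variance). The lemma states that MRC gives the better sum rate exactly when the number of users is at least $K_{\mathrm{cross,UL}}$. *)

From Stdlib Require Import Reals.
Open Scope R_scope.

Definition log2 (x : R) : R := ln x / ln 2.

(* Low-SNR ergodic uplink sum rate, MRC. *)
Definition rate_MRC (M K : nat) (Pu : R) : R :=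
  INR K * log2 (1 + Pu * INR M / (Pu * (INR K - 1) + 1)).

(* Low-SNR ergodic uplink sum rate, ZF. *)
Definition rate_ZF (M K : nat) (Pu : R) : R :=
  INR K * log2 (1 + Pu * (INR M - INR K + 1)).

Definition K_cross_UL (M : nat) (Pu : R) : R := INR M + 1 - 1 / Pu.

From Stdlib Require Import Reals Lra Psatz.
Open Scope R_scope.

(* Both sum rates are K times a base-2 logarithm, so they compare as the
   per-user SINR terms do.  The difference of those is
   P^2 (K - 1) / (P (K - 1) + 1) * (K - K_cross), with a positive factor as soon
   as K > 1, so its sign is that of K - K_cross.  The hypothesis
   P > 1 / (M - 1) is only needed for P > 0. *)

Lemma ln_ge_iff x y : 0 < x -> 0 < y -> (ln x >= ln y <-> x >= y).
Proof.
  intros hx hy; split; intro h.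
  - destruct (Rlt_or_le x y) as [lt | le]; [|lra].
    pose proof (ln_increasing x y hx lt); lra.
  - destruct (Rle_lt_or_eq_dec y x) as [lt | eq]; [lra| |subst; lra].
    pose proof (ln_increasing y x hy lt); lra.
Qed.

Lemma Rmult_ge_iff_l c x y : 0 < c -> (c * x >= c * y <-> x >= y).
Proof. intro hc; split; intro h; nra. Qed.

Lemma log2_ge_iff x y : 0 < x -> 0 < y -> (log2 x >= log2 y <-> x >= y).
Proof.
  intros hx hy; unfold log2.
  assert (hln2 : 0 < / ln 2).
  { apply Rinv_0_lt_compat; rewrite <- ln_1; apply ln_increasing; lra. }
  rewrite <- (ln_ge_iff x y hx hy).
  unfold Rdiv; rewrite !(Rmult_comm _ (/ ln 2)).
  now apply Rmult_ge_iff_l.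
Qed.

Lemma Rge_iff_of_scaled_diff x y u v c :
  0 < c -> x - y = c * (u - v) -> (x >= y <-> u >= v).
Proof. intros hc e; split; intro h; nra. Qed.

Lemma MRC_sub_ZF_SINR (m k P : R) : 0 < P -> 1 < k ->
  P * m / (P * (k - 1) + 1) - P * (m - k + 1)
  = P ^ 2 * (k - 1) / (P * (k - 1) + 1) * (k - (m + 1 - 1 / P)).
Proof. intros hP hk; field; nra. Qed.

Lemma MRC_SINR_ge_ZF_SINR_iff (m k P : R) : 0 < P -> 1 < k ->
  (P * m / (P * (k - 1) + 1) >= P * (m - k + 1) <-> k >= m + 1 - 1 / P).
Proof.
  intros hP hk.
  apply Rge_iff_of_scaled_diff with (P ^ 2 * (k - 1) / (P * (k - 1) + 1)).
  - apply Rdiv_lt_0_compat; [apply Rmult_lt_0_compat; [apply pow_lt|] |]; nra.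
  - now apply MRC_sub_ZF_SINR.
Qed.

Theorem lemma10 (M K : nat) (Pu : R) :
  (2 <= K)%nat -> (K <= M)%nat -> Pu > 1 / (INR M - 1) ->
  (rate_MRC M K Pu >= rate_ZF M K Pu <-> INR K >= K_cross_UL M Pu).
Proof.
  intros hK hKM hPu.
  apply le_INR in hK, hKM; change (INR 2) with 2 in hK.
  assert (hP : 0 < Pu).
  { assert (0 < 1 / (INR M - 1)) by (apply Rdiv_lt_0_compat; lra). lra. }
  assert (hMRC : 0 < Pu * INR M / (Pu * (INR K - 1) + 1))
    by (apply Rdiv_lt_0_compat; nra).
  unfold rate_MRC, rate_ZF, K_cross_UL.
  rewrite Rmult_ge_iff_l, log2_ge_iff by nra.
  rewrite <- MRC_SINR_ge_ZF_SINR_iff by lra.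
  lra.
Qed.
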